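(* Let $S$ be a tree and let $v$ be a vertex of $S$ of degree two, with neighbours $u,w$. Let $T$ be the tree obtained from $S$ by deleting $v$ and adding a new edge joining $u$ and $w$. If $T$ is upright, then $S$ is upright.
   Context: For a graph $G$ and $X\subseteq V(G)$, $D_G(X)$ is the set of edges with one end in $X$ and the other in $V(G)\setminus X$; for $A,B\subseteq V(G)$, $D_G(A,B)$ is the set of edges with one end in $A\setminus B$ and the other in $B\setminus A$. A bias in a graph $S$ is a set $\mathcal B$ of subsets of $V(S)$ such that: every $A\in\mathcal B$ satisfies $A\ne\emptyset, V(S)$; if $A,B\in\mathcal B$ and $D_S(A,B)=\emptyset$ then both $A\cap B$ and $A\cup B$ lie in $\mathcal B\cup\{\emptyset,V(S)\}$; and if $A,B\in\mathcal B$ and $|D_S(A,B)|=1$ then at least one of $A\cap B, A\cup B$ lies in $\mathcal B\cup\{\emptyset,V(S)\}$. A directing of $S$ assigns to each edge one of its ends as head, giving a digraph $S'$; $D^+_{S'}(X)$ is the set of edges with tail in $X$ and head outside $X$, and $D^-_{S'}(X)=D^+_{S'}(V(S)\setminus X)$. A forest $S$ is upright if for every bias $\mathcal B$ in $S$ with $|D_S(X)|\ge 2$ for all $X\in\mathcal B$, there is a directing of $S$, forming a digraph $S'$, such that $D^+_{S'}(X)\ne\emptyset$ and $D^-_{S'}(X)\neq\emptyset$ for all $X\in\mathcal B$. *)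

From mathcomp Require Import all_boot.
Set Implicit Arguments. Unset Strict Implicit. Unset Printing Implicit Defensive.

Section Graphs.
Variable V : finType.
Implicit Types (e d : rel V) (X A B : {set V}).

Definition simple_graph e := symmetric e /\ irreflexive e.

Definition has_cycle e := exists s : seq V, [/\ 2 < size s, uniq s & cycle e s].

Definition forest e := simple_graph e /\ ~ has_cycle e.

Definition connected_graph e := forall x y : V, connect e x y.

Definition tree e := forest e /\ connected_graph e.

(* |D_S(X)|: each edge with one end in X, other outside, counted once
   (as the ordered pair (end in X, end outside X)) *)
Definition cut_size e X :=
  #|[set p : V * V | [&& e p.1 p.2, p.1 \in X & p.2 \notin X]]|.

Definition cut2_size e A B :=
  #|[set p : V * V | [&& e p.1 p.2, p.1 \in A :\: B & p.2 \in B :\: A]]|.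

Definition in_bias_ext (Bs : {set {set V}}) X :=
  (X \in Bs) || (X == set0) || (X == setT).

Definition bias e (Bs : {set {set V}}) :=
  [/\ forall A, A \in Bs -> A != set0 /\ A != setT,
      forall A B, A \in Bs -> B \in Bs -> cut2_size e A B = 0 ->
        in_bias_ext Bs (A :&: B) /\ in_bias_ext Bs (A :|: B)
    & forall A B, A \in Bs -> B \in Bs -> cut2_size e A B = 1 ->
        in_bias_ext Bs (A :&: B) \/ in_bias_ext Bs (A :|: B)].

(* a directing of e: d x y means the edge xy has tail x and head y;
   every edge gets exactly one of its ends as head *)
Definition directing e d :=
  forall x y : V, (d x y -> e x y) /\ (e x y -> d x y (+) d y x).

Definition out_nonempty d X := exists x y, [/\ x \in X, y \notin X & d x y].
Definition in_nonempty d X := exists x y, [/\ x \notin X, y \in X & d x y].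

Definition upright e :=
  forall Bs : {set {set V}}, bias e Bs ->
    (forall X, X \in Bs -> 2 <= cut_size e X) ->
    exists d, directing e d /\
      forall X, X \in Bs -> out_nonempty d X /\ in_nonempty d X.
End Graphs.

Definition suppress (V : finType) (e : rel V) (v u w : V) : rel {x : V | x != v} :=
  fun x y => [|| e (val x) (val y),
                 (val x == u) && (val y == w) | (val x == w) && (val y == u)].
Arguments suppress {V} e v u w.

From mathcomp Require Import all_boot.
Set Implicit Arguments. Unset Strict Implicit. Unset Printing Implicit Defensive.

(* A set of the bias that separates v from both u and w is served by any directing in
   which u v w is a directed path: it has one arc of that path entering it and one
   leaving it.  The remaining sets, traced on the vertices of T, form a bias of T.  For
   such sets the crossing arcs at v are at most as many as the crossing arcs of the edge
   uw, and strictly fewer when the meet or the join separates v; hence cuts in T are no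
   smaller than in S, and whenever T has at most one crossing edge the bias axioms of S
   apply to the meet and join and yield one that does not separate v.  A directing of T
   for the traced bias lifts to S by replacing the arc on uw with the path u v w
   directed the same way. *)

Lemma cut_size_cut2 (V : finType) (e : rel V) (X : {set V}) :
  cut_size e X = cut2_size e X (~: X).
Proof.
rewrite /cut_size /cut2_size; apply: eq_card => p; rewrite !inE.
by case: (p.1 \in X); case: (p.2 \in X); rewrite ?andbF ?andbT.
Qed.

Lemma forest_neighbours_nonadjacent (V : finType) (e : rel V) (v u w : V) :
  forest e -> u != w -> e v u -> e v w -> ~~ e u w.
Proof.
move=> [[e_sym e_irr] acyclic] uw vu vw; apply/negP => euw; apply: acyclic.
have neq_v x : e v x -> x != v by apply: contraTneq => ->; rewrite e_irr.
exists [:: u; v; w]; split => //.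
  by rewrite /= !inE negb_or uw neq_v // eq_sym neq_v.
by rewrite /= e_sym vu vw e_sym euw.
Qed.

Lemma out_nonempty_path2 (V : finType) (d : rel V) (X : {set V}) a b c :
  d a b -> d b c -> a \in X -> c \notin X -> out_nonempty d X.
Proof.
move=> dab dbc aX cX; case: (boolP (b \in X)) => bX.
  by exists b, c.
by exists a, b.
Qed.

Lemma out_nonempty_compl (V : finType) (d : rel V) (X : {set V}) :
  out_nonempty d (~: X) <-> in_nonempty d X.
Proof.
by split=> [] [x [y [xX yX dxy]]]; exists x, y; rewrite !inE ?negbK in xX yX *.
Qed.

Section SuppressDegreeTwo.
Variables (V : finType) (e : rel V) (v u w : V).
Hypotheses (e_sym : symmetric e) (e_irr : irreflexive e).
Hypotheses (neighbours_v : [set x | e v x] = [set u; w]) (u_neq_w : u != w).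
Hypothesis u_w_nonadjacent : ~~ e u w.

Local Notation W := {x : V | x != v}.
Local Notation T := (suppress e v u w).

Lemma e_vE x : e v x = (x == u) || (x == w).
Proof. by move/setP: neighbours_v => /(_ x); rewrite !inE. Qed.

Lemma e_Ev x : e x v = (x == u) || (x == w).
Proof. by rewrite e_sym e_vE. Qed.

Lemma u_neq_v : u != v.
Proof. by apply: contraFneq (e_irr v) => uv; rewrite -{2}uv e_vE eqxx. Qed.

Lemma w_neq_v : w != v.
Proof. by apply: contraFneq (e_irr v) => wv; rewrite -{2}wv e_vE eqxx orbT. Qed.

Definition trace (X : {set V}) : {set W} := [set x : W | val x \in X].

Lemma traceI A B : trace (A :&: B) = trace A :&: trace B.
Proof. by apply/setP => x; rewrite !inE. Qed.

Lemma traceU A B : trace (A :|: B) = trace A :|: trace B.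
Proof. by apply/setP => x; rewrite !inE. Qed.

Lemma traceC A : trace (~: A) = ~: trace A.
Proof. by apply/setP => x; rewrite !inE. Qed.

Lemma trace0 : trace set0 = set0.
Proof. by apply/setP => x; rewrite !inE. Qed.

Lemma traceT : trace setT = setT.
Proof. by apply/setP => x; rewrite !inE. Qed.

Definition separates_v (X : {set V}) :=
  ((u \in X) == (w \in X)) && ((v \in X) != (u \in X)).

Lemma separates_vC X : separates_v (~: X) = separates_v X.
Proof. by rewrite /separates_v !inE; case: (u \in X); case: (v \in X); case: (w \in X). Qed.

Lemma trace_eq0 X : X != set0 -> trace X = set0 -> separates_v X.
Proof.
move=> /set0Pn[x xX] /setP trace_X0.
have notin y : y != v -> y \notin X.
  by move=> yv; have := trace_X0 (Sub y yv); rewrite !inE => ->.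
have vX : v \in X by apply: contraTT xX => vX; case: (eqVneq x v) => [->|/notin].
by rewrite /separates_v vX (negbTE (notin _ u_neq_v)) (negbTE (notin _ w_neq_v)).
Qed.

Lemma trace_eqT X : X != setT -> trace X = setT -> separates_v X.
Proof.
move=> XT trace_XT; rewrite -separates_vC; apply: trace_eq0.
  by apply: contra XT => /eqP/(congr1 (@setC _)); rewrite setCK setC0 => ->.
by rewrite traceC trace_XT setCT.
Qed.

Definition crossing (A B : {set V}) : pred (V * V) :=
  fun p => (p.1 \in A :\: B) && (p.2 \in B :\: A).

Definition edges_off_v (P : pred (V * V)) :=
  [set p : V * V | [&& p.1 != v, p.2 != v, e p.1 p.2 & P p]].

Lemma card_set_filter (s : seq (V * V)) (P : pred (V * V)) :
  uniq s -> #|[set p | p \in filter P s]| = count P s.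
Proof. by move=> us; rewrite cardsE -size_filter; apply/card_uniqP/filter_uniq. Qed.

Lemma card_edges_at_v (P : pred (V * V)) :
  #|[set p | e p.1 p.2 && P p]| =
  #|edges_off_v P| + count P [:: (v, u); (u, v); (v, w); (w, v)].
Proof.
rewrite -(cardsID [set p : V * V | (p.1 != v) && (p.2 != v)]); congr (_ + _).
  apply: eq_card => -[a b]; rewrite !inE /=.
  by case: (a != v); case: (b != v); case: (e a b); case: (P _).
have vu : (v == u) = false by rewrite eq_sym (negbTE u_neq_v).
have vw : (v == w) = false by rewrite eq_sym (negbTE w_neq_v).
rewrite -card_set_filter; last first.
  by rewrite /= !inE !xpair_eqE !eqxx vu vw /= !andbT !andbF orbF u_neq_w.
apply: eq_card => -[a b]; rewrite !inE mem_filter !inE !xpair_eqE /=.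
case: (eqVneq a v) => [->|av].
  by rewrite e_vE vu vw /= ?orbF; case: (b == u); case: (b == w); case: (P _).
case: (eqVneq b v) => [->|bv] /=; last by rewrite !andbF.
by rewrite e_Ev ?andbT ?orbF; case: (a == u); case: (a == w); case: (P _).
Qed.

Lemma card_edges_suppress (P : pred (V * V)) :
  #|[set p : W * W | T p.1 p.2 && P (val p.1, val p.2)]| =
  #|edges_off_v P| + count P [:: (u, w); (w, u)].
Proof.
pose f (p : W * W) := (val p.1, val p.2).
have f_inj : injective f by move=> [x1 y1] [x2 y2] [/val_inj -> /val_inj ->].
rewrite -(card_imset _ f_inj).
have -> : f @: [set p | T p.1 p.2 && P (val p.1, val p.2)] =
    [set p : V * V | [&& p.1 != v, p.2 != v, e p.1 p.2 || (p \in [:: (u, w); (w, u)])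
                         & P p]].
  apply/setP => -[a b]; rewrite inE; apply/imsetP/and4P.
    move=> [[x y]]; rewrite !inE /suppress /= => /andP[Txy Pxy] [-> ->].
    by rewrite (valP x) (valP y) !xpair_eqE.
  move=> [av bv Tab Pab]; exists (Sub a av, Sub b bv) => //.
  by move: Tab Pab; rewrite !inE /suppress /= !xpair_eqE => -> ->.
rewrite -(cardsID [set p : V * V | e p.1 p.2]); congr (_ + _).
  by apply: eq_card => -[a b]; rewrite !inE /=; case: (e a b); rewrite ?andbT ?andbF.
rewrite -card_set_filter; last by rewrite /= !inE !xpair_eqE (negbTE u_neq_w).
apply: eq_card => -[a b]; rewrite !inE mem_filter !inE !xpair_eqE /=.
case: (boolP ((a == u) && (b == w) || (a == w) && (b == u))) => [|_]; last first.
  by rewrite ?andbF; case: (e a b); rewrite ?andbF.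
case/orP=> /andP[/eqP-> /eqP->]; rewrite ?(e_sym w) (negbTE u_w_nonadjacent).
  by rewrite u_neq_v w_neq_v /= andbC.
by rewrite u_neq_v w_neq_v /= andbC.
Qed.

Lemma cut2_size_at_v A B :
  cut2_size e A B =
  #|edges_off_v (crossing A B)| + count (crossing A B) [:: (v, u); (u, v); (v, w); (w, v)].
Proof. exact: card_edges_at_v. Qed.

Lemma cut2_size_suppress A B :
  cut2_size T (trace A) (trace B) =
  #|edges_off_v (crossing A B)| + count (crossing A B) [:: (u, w); (w, u)].
Proof.
rewrite -(card_edges_suppress (crossing A B)).
by apply: eq_card => p; rewrite !inE /crossing /= !inE.
Qed.

Section LocalCounts.
Variables A B : {set V}.
Hypotheses (A_nsep : ~~ separates_v A) (B_nsep : ~~ separates_v B).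

Let count_at_v := count (crossing A B) [:: (v, u); (u, v); (v, w); (w, v)].
Let count_uw := count (crossing A B) [:: (u, w); (w, u)].

Lemma count_at_v_le : count_at_v <= count_uw.
Proof.
move: A_nsep B_nsep; rewrite /count_at_v /count_uw /separates_v /crossing /= !inE.
by move: (u \in A) (v \in A) (w \in A) (u \in B) (v \in B) (w \in B); do 6! case.
Qed.

Lemma count_at_v_lt :
  separates_v (A :&: B) || separates_v (A :|: B) -> count_at_v < count_uw.
Proof.
move: A_nsep B_nsep; rewrite /count_at_v /count_uw /separates_v /crossing /= !inE.
by move: (u \in A) (v \in A) (w \in A) (u \in B) (v \in B) (w \in B); do 6! case.
Qed.

Lemma separates_v_meet_join : ~~ (separates_v (A :&: B) && separates_v (A :|: B)).
Proof.
move: A_nsep B_nsep; rewrite /separates_v !inE.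
by move: (u \in A) (v \in A) (w \in A) (u \in B) (v \in B) (w \in B); do 6! case.
Qed.

Lemma cut2_size_le_suppress : cut2_size e A B <= cut2_size T (trace A) (trace B).
Proof. by rewrite cut2_size_at_v cut2_size_suppress leq_add2l count_at_v_le. Qed.

Lemma cut2_size_lt_suppress :
  separates_v (A :&: B) || separates_v (A :|: B) ->
  cut2_size e A B < cut2_size T (trace A) (trace B).
Proof. by move=> sep; rewrite cut2_size_at_v cut2_size_suppress ltn_add2l count_at_v_lt. Qed.

End LocalCounts.

Lemma cut_size_le_suppress X : ~~ separates_v X -> cut_size e X <= cut_size T (trace X).
Proof.
move=> X_nsep; rewrite !cut_size_cut2 -traceC.
by apply: cut2_size_le_suppress; rewrite ?separates_vC.
Qed.

Definition trace_bias (Bs : {set {set V}}) : {set {set W}} :=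
  [set trace X | X in Bs & ~~ separates_v X].

Lemma mem_trace_bias (Bs : {set {set V}}) X :
  X \in Bs -> ~~ separates_v X -> trace X \in trace_bias Bs.
Proof. by move=> XB X_nsep; apply/imsetP; exists X; rewrite // inE XB. Qed.

Lemma trace_biasP (Bs : {set {set V}}) Y :
  Y \in trace_bias Bs -> exists2 X, (X \in Bs) && ~~ separates_v X & Y = trace X.
Proof. by case/imsetP => X; rewrite inE => XB ->; exists X. Qed.

Lemma in_bias_ext_trace (Bs : {set {set V}}) C :
  in_bias_ext Bs C -> ~~ separates_v C -> in_bias_ext (trace_bias Bs) (trace C).
Proof.
rewrite /in_bias_ext => /orP[/orP[CB|/eqP->]|/eqP->] C_nsep.
- by rewrite mem_trace_bias.
- by rewrite trace0 eqxx orbT.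
- by rewrite traceT eqxx orbT.
Qed.

Section TraceBias.
Variable Bs : {set {set V}}.
Hypothesis Bs_bias : bias e Bs.

Lemma trace_bias_proper Y : Y \in trace_bias Bs -> Y != set0 /\ Y != setT.
Proof.
case/trace_biasP => X /andP[XB X_nsep] ->.
have [bias_proper _ _] := Bs_bias; have [X0 XT] := bias_proper X XB.
by split; apply: contra X_nsep => /eqP; [apply: trace_eq0 | apply: trace_eqT].
Qed.

Lemma trace_bias_uncrossed A B :
  A \in Bs -> B \in Bs -> ~~ separates_v A -> ~~ separates_v B ->
  cut2_size T (trace A) (trace B) = 0 ->
  in_bias_ext (trace_bias Bs) (trace A :&: trace B) /\
  in_bias_ext (trace_bias Bs) (trace A :|: trace B).
Proof.
move=> AB BB A_nsep B_nsep cutT0.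
have cut0 : cut2_size e A B = 0.
  by apply/eqP; rewrite -leqn0 -cutT0 cut2_size_le_suppress.
have nsep : ~~ (separates_v (A :&: B) || separates_v (A :|: B)).
  by apply/negP => /(cut2_size_lt_suppress A_nsep B_nsep); rewrite cutT0.
have [_ bias_uncrossed _] := Bs_bias.
have [IB UB] := bias_uncrossed A B AB BB cut0.
move: nsep; rewrite negb_or -traceI -traceU => /andP[I_nsep U_nsep].
by split; apply: in_bias_ext_trace.
Qed.

Lemma trace_bias_crossed_once A B :
  A \in Bs -> B \in Bs -> ~~ separates_v A -> ~~ separates_v B ->
  cut2_size T (trace A) (trace B) = 1 ->
  in_bias_ext (trace_bias Bs) (trace A :&: trace B) \/
  in_bias_ext (trace_bias Bs) (trace A :|: trace B).
Proof.
move=> AB BB A_nsep B_nsep cutT1; rewrite -traceI -traceU.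
have [_ bias_uncrossed bias_crossed_once] := Bs_bias.
have := cut2_size_le_suppress A_nsep B_nsep; rewrite cutT1 leq_eqVlt ltnS leqn0.
case/orP => /eqP cut.
  have nsep : ~~ (separates_v (A :&: B) || separates_v (A :|: B)).
    by apply/negP => /(cut2_size_lt_suppress A_nsep B_nsep); rewrite cut cutT1.
  move: nsep; rewrite negb_or => /andP[I_nsep U_nsep].
  by case: (bias_crossed_once A B AB BB cut) => ext; [left | right]; apply: in_bias_ext_trace.
have [IB UB] := bias_uncrossed A B AB BB cut.
have := separates_v_meet_join A_nsep B_nsep; case: (boolP (separates_v (A :&: B))).
  by move=> _ U_nsep; right; apply: in_bias_ext_trace.
by move=> I_nsep _; left; apply: in_bias_ext_trace.
Qed.

Lemma bias_trace : bias T (trace_bias Bs).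
Proof.
split; first exact: trace_bias_proper.
  move=> _ _ /trace_biasP[A /andP[AB A_nsep] ->] /trace_biasP[B /andP[BB B_nsep] ->].
  exact: trace_bias_uncrossed.
move=> _ _ /trace_biasP[A /andP[AB A_nsep] ->] /trace_biasP[B /andP[BB B_nsep] ->].
exact: trace_bias_crossed_once.
Qed.

Lemma trace_bias_cut_size :
  (forall X, X \in Bs -> 2 <= cut_size e X) ->
  forall Y, Y \in trace_bias Bs -> 2 <= cut_size T Y.
Proof.
move=> cut_Bs _ /trace_biasP[X /andP[XB X_nsep] ->].
exact: leq_trans (cut_Bs X XB) (cut_size_le_suppress X_nsep).
Qed.

End TraceBias.

Definition lift_rel (d' : rel W) : rel V :=
  fun x y => [exists p : W * W, [&& val p.1 == x, val p.2 == y & d' p.1 p.2]].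

Lemma lift_rel_val (d' : rel W) x y : lift_rel d' (val x) (val y) = d' x y.
Proof.
apply/existsP/idP => [[[x' y'] /and3P[/eqP/val_inj-> /eqP/val_inj-> //]] | dxy].
by exists (x, y); rewrite !eqxx.
Qed.

(* On the two edges at [v], [(x == u) || (y == w)] selects exactly the arcs [u -> v]
   and [v -> w]. *)
Definition lift_directing (d' : rel W) : rel V := fun x y =>
  e x y &&
  (if (x != v) && (y != v) then lift_rel d' x y
   else if lift_rel d' u w then (x == u) || (y == w) else (x == w) || (y == u)).

Section Lift.
Let uW : W := Sub u u_neq_v.
Let wW : W := Sub w w_neq_v.

Variable d' : rel W.
Hypothesis d'_directing : directing T d'.
Local Notation d := (lift_directing d').

Lemma lift_rel_uw : lift_rel d' u w = d' uW wW.
Proof. exact: (lift_rel_val d' uW wW). Qed.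

Lemma lift_directing_val x y : e (val x) (val y) -> d (val x) (val y) = d' x y.
Proof. by move=> exy; rewrite /lift_directing exy (valP x) (valP y) lift_rel_val. Qed.

Lemma lift_directing_from_v x :
  d v x = e v x && (if d' uW wW then x == w else x == u).
Proof.
rewrite /lift_directing eqxx lift_rel_uw /=.
by rewrite !(eq_sym v) (negbTE u_neq_v) (negbTE w_neq_v).
Qed.

Lemma lift_directing_to_v x :
  d x v = e x v && (if d' uW wW then x == u else x == w).
Proof.
rewrite /lift_directing eqxx andbF lift_rel_uw /=.
by rewrite !(eq_sym v) (negbTE u_neq_v) (negbTE w_neq_v) !orbF.
Qed.

Lemma lift_directing_uvw : d' uW wW -> d u v && d v w.
Proof.
move=> duw; rewrite lift_directing_from_v lift_directing_to_v duw.
by rewrite e_vE e_Ev !eqxx orbT.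
Qed.

Lemma lift_directing_wvu : ~~ d' uW wW -> d w v && d v u.
Proof.
move=> nduw; rewrite lift_directing_from_v lift_directing_to_v (negbTE nduw).
by rewrite e_vE e_Ev !eqxx orbT.
Qed.

Lemma directing_lift : directing e d.
Proof.
move=> x y; split=> [/andP[] // | exy].
have wu : (w == u) = false by rewrite eq_sym (negbTE u_neq_w).
case: (eqVneq x v) exy => [-> | xv] exy.
  move: exy; rewrite e_vE lift_directing_from_v lift_directing_to_v e_vE e_Ev.
  by case/orP => /eqP->; rewrite !eqxx /= ?(negbTE u_neq_w) ?wu ?orbT; case: (d' uW wW).
case: (eqVneq y v) exy => [-> | yv] exy.
  move: exy; rewrite e_Ev lift_directing_from_v lift_directing_to_v e_vE e_Ev.
  by case/orP => /eqP->; rewrite !eqxx /= ?(negbTE u_neq_w) ?wu ?orbT; case: (d' uW wW).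
rewrite -(insubdK uW xv) -(insubdK uW yv) !lift_directing_val ?insubdK ?(e_sym y) //.
by apply: (d'_directing _ _).2; rewrite /suppress !insubdK // exy.
Qed.

Lemma out_nonempty_lift X : out_nonempty d' (trace X) -> out_nonempty d X.
Proof.
move=> [x [y [xX yX dxy]]]; rewrite !inE in xX yX.
have T_uw : T uW wW by rewrite /suppress /= !eqxx orbT.
move: ((d'_directing x y).1 dxy); rewrite /suppress.
case/or3P => [exy | /andP[/eqP xu /eqP yw] | /andP[/eqP xw /eqP yu]].
- by exists (val x), (val y); rewrite lift_directing_val.
- have [xuW ywW] : x = uW /\ y = wW by split; apply: val_inj.
  move: dxy; rewrite xuW ywW => /lift_directing_uvw /andP[duv dvw].
  by apply: out_nonempty_path2 duv dvw _ _; rewrite -?xu -?yw.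
- have [xwW yuW] : x = wW /\ y = uW by split; apply: val_inj.
  have nduw : ~~ d' uW wW.
    by have [_ /(_ T_uw)] := d'_directing uW wW; rewrite -xwW -yuW dxy addbT.
  case/andP: (lift_directing_wvu nduw) => dwv dvu.
  by apply: out_nonempty_path2 dwv dvu _ _; rewrite -?xw -?yu.
Qed.

Lemma in_nonempty_lift X : in_nonempty d' (trace X) -> in_nonempty d X.
Proof.
move=> /(out_nonempty_compl _ _).2; rewrite -traceC => /out_nonempty_lift.
exact: (out_nonempty_compl _ _).1.
Qed.

Lemma separates_v_lift X : separates_v X -> out_nonempty d X /\ in_nonempty d X.
Proof.
move=> /andP[/eqP uXw vXu].
have through_v a c : d a v -> d v c -> (a \in X) = (c \in X) -> (v \in X) != (a \in X) ->
    out_nonempty d X /\ in_nonempty d X.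
  move=> dav dvc; case vX: (v \in X); case aX: (a \in X) => //= /esym cX _.
    by split; [exists v, c | exists a, v]; split; rewrite ?vX ?aX ?cX.
  by split; [exists a, v | exists v, c]; split; rewrite ?vX ?aX ?cX.
case: (boolP (d' uW wW)) => [/lift_directing_uvw | /lift_directing_wvu] /andP[dav dvc].
  exact: through_v dav dvc uXw vXu.
by apply: through_v dav dvc _ _; rewrite -uXw.
Qed.

End Lift.

Lemma upright_of_suppress : upright T -> upright e.
Proof.
move=> T_upright Bs Bs_bias Bs_cut.
have [d' [d'_directing d'_bias]] :=
  T_upright _ (bias_trace Bs_bias) (trace_bias_cut_size Bs_cut).
exists (lift_directing d'); split; first exact: directing_lift.
move=> X XB; case: (boolP (separates_v X)) => [| X_nsep]; first exact: separates_v_lift.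
have [d'_out d'_in] := d'_bias _ (mem_trace_bias XB X_nsep).
by split; [apply: out_nonempty_lift | apply: in_nonempty_lift].
Qed.

End SuppressDegreeTwo.

Theorem mainTheorem3 (V : finType) (e : rel V) (v u w : V) :
  tree e ->
  u != w ->
  [set x | e v x] = [set u; w] ->
  upright (suppress e v u w) ->
  upright e.
Proof.
move=> [forest_e _] u_neq_w neighbours_v; have [[e_sym e_irr] _] := forest_e.
apply: upright_of_suppress => //.
by apply: (forest_neighbours_nonadjacent (v := v)); rewrite ?(e_vE neighbours_v) ?eqxx ?orbT.
Qed.
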